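(* Let $\Sigma$ be a first-order language and let $\mathcal{T}_{\Sigma,\infty}$ be the family of all complete theories in $\Sigma$ having infinite models. If $\Sigma$ is finite and contains no predicate symbols of arity $m\ge 2$ and no function symbols of arity $n\ge 1$, then ${\rm RS}(\mathcal{T}_{\Sigma,\infty})$ is finite (a natural number); otherwise ${\rm RS}(\mathcal{T}_{\Sigma,\infty})=\infty$.
   Context: Theories are complete consistent first-order theories; structures have nonempty universes. Function symbols (constants being $0$-ary function symbols) are treated via their graphs: each $n$-ary function symbol $f$ is replaced by an $(n+1)$-ary predicate $R_f=\{(\bar a,b)\mid f(\bar a)=b\}$, and sentences are those of the resulting relational language. For a family $\mathcal{T}$ of theories and a sentence $\varphi$ of its language, $\mathcal{T}_\varphi=\{T\in\mathcal{T}\mid\varphi\in T\}$. The rank ${\rm RS}$ of a family is defined as follows: ${\rm RS}(\emptyset)=-1$; ${\rm RS}(\mathcal{T})=0$ for finite nonempty $\mathcal{T}$; ${\rm RS}(\mathcal{T})\ge 1$ for infinite $\mathcal{T}$; for $\alpha=\beta+1$, ${\rm RS}(\mathcal{T})\ge\alpha$ iff there are pairwise inconsistent sentences $\varphi_k$, $k\in\omega$, of the language of $\mathcal{T}$ with ${\rm RS}(\mathcal{T}_{\varphi_k})\ge\beta$ for all $k$; for limit $\alpha$, ${\rm RS}(\mathcal{T})\ge\alpha$ iff ${\rm RS}(\mathcal{T})\ge\beta$ for all $\beta<\alpha$; ${\rm RS}(\mathcal{T})=\alpha$ iff ${\rm RS}(\mathcal{T})\ge\alpha$ and not ${\rm RS}(\mathcal{T})\ge\alpha+1$;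 ${\rm RS}(\mathcal{T})=\infty$ if ${\rm RS}(\mathcal{T})\ge\alpha$ for every ordinal $\alpha$. *)

(* First-order logic over a signature Sigma,
   with function symbols replaced by their graphs, as in the paper. *)
From mathcomp Require Import all_boot.
From Stdlib Require List.

Set Implicit Arguments.
Unset Strict Implicit.
Unset Printing Implicit Defensive.

Record signature := Signature {
  psym : Type;
  parity : psym -> nat;
  fsym : Type;
  farity : fsym -> nat }.

(* Relational language: predicate symbols and graphs R_f of function symbols *)
Definition rsym (S : signature) : Type := (psym S + fsym S)%type.
Definition rarity (S : signature) (r : rsym S) : nat :=
  match r with inl p => parity p | inr f => (farity f).+1 end.

Definition finite_type (X : Type) : Prop :=
  exists l : seq X, forall x : X, List.In x l.

Definition finite_signature (S : signature) : Prop :=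
  finite_type (psym S) /\ finite_type (fsym S).

(* ---------- Formulas of the relational language (with equality) ----------
   Variables are de Bruijn indices; FEx binds index 0. *)
Inductive formula (S : signature) : Type :=
| FRel (r : rsym S) (args : 'I_(rarity r) -> nat)
| FEq (i j : nat)
| FNot (f : formula S)
| FAnd (f g : formula S)
| FEx (f : formula S).

Fixpoint closed_below (S : signature) (k : nat) (f : formula S) : bool :=
  match f with
  | FRel r args => [forall i, args i < k]
  | FEq i j => (i < k) && (j < k)
  | FNot g => closed_below k g
  | FAnd g h => closed_below k g && closed_below k h
  | FEx g => closed_below k.+1 g
  end.

Definition sentence (S : signature) : Type :=
  {f : formula S | closed_below 0 f}.

Definition sneg (S : signature) (phi : sentence S) : sentence S :=
  exist _ (FNot (proj1_sig phi)) (proj2_sig phi).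

Record structure (S : signature) := Structure {
  dom : Type;
  dom_inhab : dom;
  pint : forall p : psym S, ('I_(parity p) -> dom) -> Prop;
  fint : forall f : fsym S, ('I_(farity f) -> dom) -> dom }.

Definition rint (S : signature) (M : structure S) (r : rsym S) :
  ('I_(rarity r) -> dom M) -> Prop :=
  match r as r0 return ('I_(rarity r0) -> dom M) -> Prop with
  | inl p => fun a => pint a
  | inr f => fun a =>
      fint (fun i : 'I_(farity f) => a (widen_ord (leqnSn _) i)) = a ord_max
  end.

Definition scons (X : Type) (x : X) (e : nat -> X) (n : nat) : X :=
  match n with 0 => x | n'.+1 => e n' end.

Fixpoint sat (S : signature) (M : structure S) (e : nat -> dom M)
  (f : formula S) : Prop :=
  match f with
  | FRel r args => rint (fun i => e (args i))
  | FEq i j => e i = e j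
  | FNot g => ~ sat e g
  | FAnd g h => sat e g /\ sat e h
  | FEx g => exists m : dom M, sat (scons m e) g
  end.

Definition satS (S : signature) (M : structure S) (phi : sentence S) : Prop :=
  sat (fun _ => dom_inhab M) (proj1_sig phi).

Definition theory (S : signature) : Type := sentence S -> Prop.

Definition models (S : signature) (M : structure S) (T : theory S) : Prop :=
  forall phi, T phi -> satS M phi.

Definition complete_theory (S : signature) (T : theory S) : Prop :=
  (exists M : structure S, models M T) /\
  (forall phi, (forall M : structure S, models M T -> satS M phi) -> T phi) /\
  (forall phi, T phi \/ T (sneg phi)).

Definition family (S : signature) : Type := theory S -> Prop.

Definition T_inf (S : signature) : family S := fun T =>
  complete_theory T /\
  exists M : structure S, ~ finite_type (dom M) /\ models M T.

Definition restrict (S : signature) (F : family S) (phi : sentence S) : family S :=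
  fun T => F T /\ T phi.

Definition family_nonempty (S : signature) (F : family S) : Prop :=
  exists T, F T.

Definition family_finite (S : signature) (F : family S) : Prop :=
  exists l : seq (theory S), forall T, F T ->
    exists T', List.In T' l /\ forall phi, T phi <-> T' phi.

Definition family_infinite (S : signature) (F : family S) : Prop :=
  ~ family_finite F.

Definition inconsistent2 (S : signature) (phi psi : sentence S) : Prop :=
  forall M : structure S, ~ (satS M phi /\ satS M psi).

(* ---------- Ordinals as positions in well-orders ---------- *)
Definition well_order (W : Type) (lt : W -> W -> Prop) : Prop :=
  well_founded lt /\
  (forall a b c, lt a b -> lt b c -> lt a c) /\
  (forall a b, lt a b \/ a = b \/ lt b a).

Definition is_min (W : Type) (lt : W -> W -> Prop) (w : W) : Prop :=
  forall v, ~ lt v w.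

Definition is_succ (W : Type) (lt : W -> W -> Prop) (v w : W) : Prop :=
  lt v w /\ forall u, lt v u -> ~ lt u w.

Definition is_limit (W : Type) (lt : W -> W -> Prop) (w : W) : Prop :=
  ~ is_min lt w /\ ~ exists v, is_succ lt v w.

(* RSge lt F w  <->  RS(F) >= (the ordinal of position w in the well-order lt) *)
Inductive RSge (S : signature) (W : Type) (lt : W -> W -> Prop) :
  family S -> W -> Prop :=
| RSge_zero F w : is_min lt w -> family_nonempty F -> RSge lt F w
| RSge_one F w v : is_min lt v -> is_succ lt v w -> family_infinite F ->
    RSge lt F w
| RSge_succ F w v : ~ is_min lt v -> is_succ lt v w ->
    (exists phi : nat -> sentence S,
        (forall i j, i <> j -> inconsistent2 (phi i) (phi j)) /\
        (forall k, RSge lt (restrict F (phi k)) v)) ->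
    RSge lt F w
| RSge_lim F w : is_limit lt w ->
    (forall v, lt v w -> RSge lt F v) -> RSge lt F w.

Definition RS_eq_nat (S : signature) (F : family S) (n : nat) : Prop :=
  RSge Peano.lt F n /\ ~ RSge Peano.lt F n.+1.

Definition RS_infty (S : signature) (F : family S) : Prop :=
  forall (W : Type) (lt : W -> W -> Prop), well_order lt ->
    forall w : W, RSge lt F w.

Definition small_signature (S : signature) : Prop :=
  finite_signature S /\ (forall p : psym S, parity p < 2) /\
  (forall f : fsym S, farity f = 0).

Arguments T_inf S : clear implicits.

(* If the signature is not small, then for every bit pattern B : nat -> bool there is an
   infinite structure M_B whose theory contains a fixed sentence bit_j exactly when B j
   holds: bit_j says that the j-th unary predicate is nonempty, that the (j+1)-th constant
   equals the 0-th one, or that a definable successor-like relation has a maximal chain of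
   j+1 steps.  Arranging the bits in rows via a pairing of nat, the sentences "n is the
   least set bit of row i" are pairwise inconsistent, and the theories of the M_B with
   finitely many rows frozen form a family splitting into countably many families of the
   same kind; well-founded induction then gives every ordinal as a lower bound for RS.

   For a small signature (finitely many nullary and unary predicates and constants) a
   back-and-forth argument shows that a sentence of quantifier depth q is decided by the
   Q-profile of a model, for Q >= q + #constants: the unary types of the constants, their
   equalities, and the number of elements of each unary type counted up to Q.  By
   induction on d, if every model of a family F has at most d types realized Q times, then
   RS(F) <= d: in a splitting by sentences phi_k some F_(phi_k) has a model whose big types
   stay big up to the depth of phi_k, two such models share their Q-profile by pigeonhole,
   and inflating the big types of one of them to infinity gives a model of phi_k and phi_j.
   Hence RS(T_inf) is at most the number of unary types. *)

From mathcomp Require Import all_boot zify.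
From Stdlib Require Import Classical ClassicalEpsilon FunctionalExtensionality.
From Stdlib Require Cantor List.

Set Implicit Arguments.
Unset Strict Implicit.
Unset Printing Implicit Defensive.

Lemma In_mem (T : eqType) (x : T) (s : seq T) : List.In x s <-> x \in s.
Proof.
elim: s => [|a s IH] //=; rewrite in_cons; split.
  by move=> [->|/IH ->]; rewrite ?eqxx ?orbT.
by move=> /orP[/eqP->|/IH]; [left|right].
Qed.

Lemma length_size (X : Type) (l : list X) : List.length l = size l.
Proof. by elim: l => //= a l ->. Qed.

Lemma NoDup_map_inj_in (X Y : Type) (f : X -> Y) (l : list X) :
  (forall x y, List.In x l -> List.In y l -> f x = f y -> x = y) ->
  List.NoDup l -> List.NoDup (List.map f l).
Proof. by move=> H; apply: List.NoDup_map_NoDup_ForallPairs => x y hx hy; apply: H. Qed.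

Lemma In_tnth (X : Type) (l : list X) (x : X) :
  List.In x l -> exists i, tnth (in_tuple l) i = x.
Proof.
elim: l => [|a l IH] //= [<-|/IH [i <-]]; first by exists ord0; rewrite (tnth_nth a).
have i_lt : i.+1 < size (a :: l) by rewrite /= ltnS.
by exists (Ordinal i_lt); rewrite !(tnth_nth a).
Qed.

Lemma NoDup_representatives (X Y : Type) (v : X -> Y) (P : X -> Prop) (l : list X) :
  exists A, [/\ forall a, List.In a A -> List.In a l /\ P a,
    List.NoDup (List.map v A),
    forall a, List.In a l -> P a -> exists2 b, List.In b A & v a = v b
    & List.length A <= List.length l].
Proof.
elim: l => [|x l [A [A_sub A_nodup A_cover A_len]]].
  by exists nil; split=> //; exact: List.NoDup_nil.
case: (classic (P x /\ forall b, List.In b A -> v x <> v b)) => [[Px x_new]|x_old].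
  exists (x :: A); split=> /=; last by rewrite ltnS.
  - by move=> a [<-|/A_sub [la Pa]]; split=> //; [left | right].
  - by constructor=> // /List.in_map_iff [b [vb /x_new]]; apply; rewrite vb.
  - move=> a [<-|la] Pa; first by exists x; [left|].
    by have [b lb vb] := A_cover a la Pa; exists b; [right|].
exists A; split=> /=; last exact: leqW.
- by move=> a /A_sub [la Pa]; split=> //; right.
- exact: A_nodup.
- move=> a [<-|la] Pa; last exact: A_cover.
  by apply: NNPP => no_b; apply: x_old; split=> // b lb vb; apply: no_b; exists b.
Qed.

Lemma rel_into_list_not_injective (A : Type) (l : list A) (R : nat -> A -> Prop) :
  (forall k, exists2 a, List.In a l & R k a) ->
  ~ (forall k j a, R k a -> R j a -> k = j).
Proof.
elim: l R => [|a l IH] R Rtot Rinj; first by case: (Rtot 0).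
case: (classic (exists k0, R k0 a)) => [[k0 Rk0]|Ra]; last first.
  apply: (IH R) => // k; case: (Rtot k) => b [<-|lb] Rb; last by exists b.
  by case: Ra; exists k.
pose skip k := if k < k0 then k else k.+1.
apply: (IH (fun k => R (skip k))); last first.
  move=> k j b Rkb Rjb; have := Rinj _ _ _ Rkb Rjb.
  by rewrite /skip; case: (ltnP k k0); case: (ltnP j k0); lia.
move=> k; case: (Rtot (skip k)) => b [<-|lb] Rb; last by exists b.
by have := Rinj _ _ _ Rb Rk0; rewrite /skip; case: (ltnP k k0); lia.
Qed.

Lemma nat_not_finite : ~ finite_type nat.
Proof.
move=> [l Hl]; pose b := foldr maxn 0 l.
have le_b x : List.In x l -> x <= b.
  rewrite /b; elim: (l) => //= a s IH [->|/IH]; lia.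
by have := le_b b.+1 (Hl _); rewrite ltnn.
Qed.

Lemma nat_pair_not_finite : ~ finite_type (nat * nat).
Proof.
move=> [l Hl]; apply: nat_not_finite; exists (List.map fst l) => x.
exact: (List.in_map fst l (x, 0)).
Qed.

Lemma infinite_nat_embedding (X : Type) :
  ~ finite_type X -> exists g : nat -> X, injective g.
Proof.
move=> Xinf.
have fresh (l : list X) : exists x, ~ List.In x l.
  apply: NNPP => H; apply: Xinf; exists l => x.
  by apply: NNPP => Hx; apply: H; exists x.
pose next l := proj1_sig (constructive_indefinite_description _ (fresh l)).
have next_fresh l : ~ List.In (next l) l.
  exact: proj2_sig (constructive_indefinite_description _ (fresh l)).
pose history n := iter n (fun l => next l :: l) nil.
have in_history m n : m < n -> List.In (next (history m)) (history n).
  elim: n => // n IH; rewrite ltnS leq_eqVlt => /orP[/eqP->|/IH]; by [left | right].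
exists (fun n => next (history n)) => m n /= E.
case: (ltngtP m n) => // /in_history.
  by rewrite E => /next_fresh.
by rewrite -E => /next_fresh.
Qed.

Definition propb (P : Prop) : bool := is_left (excluded_middle_informative P).

Lemma propbP (P : Prop) : reflect P (propb P).
Proof. by rewrite /propb; case: excluded_middle_informative => h; constructor. Qed.

Lemma propb_inj (P Q : Prop) : propb P = propb Q -> (P <-> Q).
Proof. by case: propbP; case: propbP. Qed.

Lemma propb_ext (P Q : Prop) : (P <-> Q) -> propb P = propb Q.
Proof. by move=> PQ; apply/idP/idP => /propbP/PQ/propbP. Qed.

Definition theory_of (S : signature) (M : structure S) : theory S := satS M.

Lemma theory_of_T_inf (S : signature) (M : structure S) :
  ~ finite_type (dom M) -> T_inf S (theory_of M).
Proof.
move=> Minf; split; last by exists M; split.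
split; first by exists M.
split; first by move=> phi; apply.
by move=> phi; exact: classic.
Qed.

Lemma family_infinite_of_distinct (S : signature) (F : family S) (T : nat -> theory S) :
  (forall k, F (T k)) -> (forall k j, (forall phi, T k phi <-> T j phi) -> k = j) ->
  family_infinite F.
Proof.
move=> FT Tinj [l Hl].
apply: (@rel_into_list_not_injective _ l (fun k T' => forall phi, T k phi <-> T' phi)).
  by move=> k; have [T' [lT' ET']] := Hl _ (FT k); exists T'.
move=> k j T' Ek Ej; apply: Tinj => phi; rewrite Ek; exact: iff_sym.
Qed.

Definition sand (S : signature) (phi psi : sentence S) : sentence S :=
  exist _ (FAnd (proj1_sig phi) (proj1_sig psi))
    (introT andP (conj (proj2_sig phi) (proj2_sig psi))).

Definition strue (S : signature) : sentence S := exist _ (FEx (FEq S 0 0)) isT.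

Lemma sat_sand (S : signature) (M : structure S) phi psi :
  satS M (sand phi psi) <-> satS M phi /\ satS M psi.
Proof. by []. Qed.

Lemma sat_sneg (S : signature) (M : structure S) phi : satS M (sneg phi) <-> ~ satS M phi.
Proof. by []. Qed.

Lemma sat_strue (S : signature) (M : structure S) : satS M (strue S).
Proof. by exists (dom_inhab M). Qed.

Lemma closed_below_mono (S : signature) (f : formula S) k k' :
  k <= k' -> closed_below k f -> closed_below k' f.
Proof.
elim: f k k' => [r args|i j|g IH|g IHg h IHh|g IH] k k' hk /=.
- by move/forallP=> H; apply/forallP=> i; exact: leq_trans (H i) hk.
- by move/andP=> [hi hj]; rewrite (leq_trans hi hk) (leq_trans hj hk).
- exact: IH.
- by move/andP=> [cg ch]; rewrite (IHg _ _ hk cg) (IHh _ _ hk ch).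
- by apply: IH.
Qed.

(** * Independent bits force infinite rank *)

Definition cell (i n : nat) : nat := Cantor.to_nat (i, n).

Section BitEncoding.
Variable S : signature.
Variable bit : nat -> sentence S.
Variable M : (nat -> bool) -> structure S.
Hypothesis M_infinite : forall B, ~ finite_type (dom (M B)).
Hypothesis M_bit : forall B j, satS (M B) (bit j) <-> B j.

Fixpoint no_bit_before (i n : nat) : sentence S :=
  if n is n'.+1 then sand (no_bit_before i n') (sneg (bit (cell i n'))) else strue S.

Lemma no_bit_before_sat (N : structure S) i n :
  satS N (no_bit_before i n) <-> forall m, m < n -> ~ satS N (bit (cell i m)).
Proof.
elim: n => [|n IH] /=; first by split=> // _; exact: sat_strue.
rewrite sat_sand IH sat_sneg; split.
  by move=> [H1 H2] m; rewrite ltnS leq_eqVlt => /orP[/eqP->|/H1].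
by move=> H; split=> [m hm|]; apply: H; rewrite // ltnW.
Qed.

Definition least_bit (i n : nat) : sentence S := sand (bit (cell i n)) (no_bit_before i n).

Lemma least_bit_inconsistent i n n' : n <> n' -> inconsistent2 (least_bit i n) (least_bit i n').
Proof.
wlog lt_nn' : n n' / n < n'.
  move=> W ne_nn'; case: (ltngtP n n') => [lt_nn'|lt_n'n|//]; first exact: W.
  by move=> N [H H']; apply: (W n' n lt_n'n (nesym ne_nn') N).
move=> _ N; rewrite !sat_sand !no_bit_before_sat => -[[bit_n _] [_ /(_ n lt_nn')]] //.
Qed.

Definition rows_agree (N : nat) (B0 B : nat -> bool) : Prop :=
  forall i n, i < N -> B (cell i n) = B0 (cell i n).

Definition contains_cylinder (F : family S) : Prop :=
  exists N B0, forall B, rows_agree N B0 B -> F (theory_of (M B)).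

Definition set_row (B0 : nat -> bool) (N n : nat) (x : nat) : bool :=
  let (i, m) := Cantor.of_nat x in if i == N then m == n else B0 x.

Lemma set_row_cell B0 N n i m :
  set_row B0 N n (cell i m) = if i == N then m == n else B0 (cell i m).
Proof. by rewrite /set_row /cell Cantor.cancel_of_to. Qed.

Lemma rows_agree_set_row N B0 n : rows_agree N B0 (set_row B0 N n).
Proof. by move=> i m hi; rewrite set_row_cell (ltn_eqF hi). Qed.

Lemma cylinder_nonempty F : contains_cylinder F -> family_nonempty F.
Proof. by move=> [N [B0 H]]; exists (theory_of (M B0)); apply: H. Qed.

Lemma cylinder_infinite F : contains_cylinder F -> family_infinite F.
Proof.
move=> [N [B0 H]].
apply: (@family_infinite_of_distinct _ _ (fun k => theory_of (M (set_row B0 N k)))).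
  by move=> k; apply/H/rows_agree_set_row.
move=> k j /(_ (bit (cell N k))); rewrite /theory_of !M_bit !set_row_cell eqxx eq_refl.
by move=> [/(_ isT) /eqP].
Qed.

Lemma cylinder_restrict F N B0 :
  (forall B, rows_agree N B0 B -> F (theory_of (M B))) ->
  forall n, contains_cylinder (restrict F (least_bit N n)).
Proof.
move=> H n; exists N.+1, (set_row B0 N n) => B HB; split.
  apply: H => i m hi; rewrite HB ?set_row_cell ?(ltn_eqF hi) //; exact: ltnW.
rewrite /theory_of sat_sand M_bit no_bit_before_sat HB // set_row_cell !eqxx.
by split=> // m hm; rewrite M_bit HB // set_row_cell eqxx (ltn_eqF hm).
Qed.

Lemma cylinder_RS_infty F : contains_cylinder F -> RS_infty F.
Proof.
move=> HF W lt [wf _] w.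
elim/(well_founded_ind wf): w F HF => w IH F HF.
case: (classic (is_min lt w)) => [w_min|w_not_min].
  exact: RSge_zero (cylinder_nonempty HF).
case: (classic (exists v, is_succ lt v w)) => [[v w_succ]|w_limit]; last first.
  by apply: RSge_lim => [|v /IH]; [split | apply].
case: (classic (is_min lt v)) => [v_min|v_not_min].
  exact: RSge_one v_min w_succ (cylinder_infinite HF).
apply: (RSge_succ v_not_min w_succ).
have [N [B0 H]] := HF; exists (least_bit N); split.
  by move=> i j; apply: least_bit_inconsistent.
move=> k; apply: IH; first by case: w_succ.
exact: cylinder_restrict H k.
Qed.

Lemma RS_infty_of_bits : RS_infty (T_inf S).
Proof.
apply: cylinder_RS_infty; exists 0, (fun _ => false) => B _.
exact: theory_of_T_inf.
Qed.

End BitEncoding.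

Section UnaryPredicateBits.
Variables (S : signature) (g : nat -> psym S).
Hypothesis g_inj : injective g.

Definition unary_bits_structure (B : nat -> bool) : structure S :=
  @Structure S nat 0 (fun q _ => exists2 j, q = g j & B j) (fun _ _ => 0).

Definition unary_bit (j : nat) : sentence S :=
  exist _ (FEx (@FRel S (inl (g j)) (fun _ => 0))) (introT forallP (fun _ => isT)).

Lemma unary_bit_sat B j : satS (unary_bits_structure B) (unary_bit j) <-> B j.
Proof. by split=> [[_ [j' /g_inj ->]] | Bj]; last by exists 0, j. Qed.

End UnaryPredicateBits.

Lemma RS_infty_of_infinite_psym (S : signature) :
  ~ finite_type (psym S) -> RS_infty (T_inf S).
Proof.
move=> /infinite_nat_embedding [g g_inj].
apply: (@RS_infty_of_bits _ (unary_bit g) (unary_bits_structure g)) => B.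
  exact: nat_not_finite.
exact: unary_bit_sat.
Qed.

Section ConstantBits.
Variables (S : signature) (g : nat -> fsym S).
Hypothesis g_inj : injective g.

(* Every function symbol is constant; [g j.+1] takes the value of [g 0] iff [B j]. *)
Definition constant_bits_structure (B : nat -> bool) : structure S :=
  @Structure S nat 0 (fun _ _ => False)
    (fun h _ => if propb (exists2 j, h = g j.+1 & ~~ B j) then 1 else 0).

Definition constant_bit (j : nat) : sentence S :=
  exist _ (FEx (FAnd (@FRel S (inr (g 0)) (fun _ => 0))
                     (@FRel S (inr (g j.+1)) (fun _ => 0))))
    (introT andP (conj (introT forallP (fun _ => isT)) (introT forallP (fun _ => isT)))).

Lemma constant_bit_sat B j : satS (constant_bits_structure B) (constant_bit j) <-> B j.
Proof.
rewrite /satS /=.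
case: (propbP (exists2 j', g 0 = g j'.+1 & ~~ B j')) => [[j' /g_inj //]|_].
case: (propbP (exists2 j', g j.+1 = g j'.+1 & ~~ B j')).
  by move=> [j' /g_inj [<-] /negbTE ->]; split=> // -[x [<-]].
move=> Bj.
split=> [_|]; last by exists 0.
by apply: NNPP => nBj; apply: Bj; exists j => //; apply/negP.
Qed.

End ConstantBits.

Lemma RS_infty_of_infinite_fsym (S : signature) :
  ~ finite_type (fsym S) -> RS_infty (T_inf S).
Proof.
move=> /infinite_nat_embedding [g g_inj].
apply: (@RS_infty_of_bits _ (constant_bit g) (constant_bits_structure g)) => B.
  exact: nat_not_finite.
exact: constant_bit_sat.
Qed.

(* On [nat * nat], row [i] carries the chain [(i,0) -> (i,1) -> ... -> (i,i.+1)] if [B i]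
   and no steps otherwise; so bit [j] is read off as the existence of a maximal chain of
   exactly [j.+1] steps. *)
Definition chain_step (B : nat -> bool) (x y : nat * nat) : Prop :=
  [/\ y.1 = x.1, B x.1, y.2 = x.2.+1 & x.2 <= x.1].

Section ChainBits.
Variables (S : signature) (B : nat -> bool).
Variable E : nat -> nat -> formula S.
Hypothesis E_closed : forall a b k, a < k -> b < k -> closed_below k (E a b).
Variables (M : structure S) (c : dom M -> nat * nat).
Hypothesis c_surj : forall p, exists x, c x = p.
Hypothesis E_sat : forall e a b, sat e (E a b) <-> chain_step B (c (e a)) (c (e b)).

Fixpoint chain_from (n : nat) : formula S :=
  if n is n'.+1 then FEx (FAnd (E 1 0) (chain_from n'))
  else FEx (FAnd (E 1 0) (FNot (FEx (E 1 0)))).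

Lemma chain_from_closed n : closed_below 1 (chain_from n).
Proof.
elim: n => [|n IH] /=; first by rewrite !E_closed.
by rewrite E_closed // (closed_below_mono _ IH).
Qed.

Definition chain_bit (j : nat) : sentence S :=
  exist _ (FEx (FAnd (FNot (FEx (E 0 1))) (chain_from j)))
    (introT andP (conj (E_closed (isT : 0 < 2) (isT : 1 < 2)) (chain_from_closed j))).

Lemma chain_from_sat n e :
  sat e (chain_from n) <-> B (c (e 0)).1 /\ (c (e 0)).2 + n = (c (e 0)).1.
Proof.
elim: n e => [|n IH] e /=; split.
- move=> [y [/E_sat [/= y1 Bx y2 le_x] end_y]]; split=> //.
  apply: NNPP => ne; apply: end_y.
  have [z cz] := c_surj ((c y).1, (c y).2.+1); exists z; apply/E_sat => /=.
  by rewrite cz; split; rewrite /= ?y1 //; lia.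
- move=> [Bx ex]; have [y cy] := c_surj ((c (e 0)).1, (c (e 0)).2.+1).
  exists y; split; first by apply/E_sat; rewrite /= cy; split=> //=; lia.
  by move=> [z /E_sat]; rewrite /= cy => -[/= _ _ _]; lia.
- by move=> [y [/E_sat [/= y1 Bx y2 _] /IH /= [_]]]; split=> //; lia.
- move=> [Bx ex]; have [y cy] := c_surj ((c (e 0)).1, (c (e 0)).2.+1).
  exists y; split; first by apply/E_sat; rewrite /= cy; split=> //=; lia.
  by apply/IH; rewrite /= cy; split=> //=; lia.
Qed.

Lemma chain_bit_sat j : satS M (chain_bit j) <-> B j.
Proof.
rewrite /satS /=; split.
  move=> [x [no_pred /chain_from_sat [/= Bx ex]]].
  case: (posnP (c x).2) => [x0|x_pos]; first by move: Bx; rewrite -ex x0.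
  case: no_pred; have [y cy] := c_surj ((c x).1, (c x).2.-1).
  by exists y; apply/E_sat; rewrite /= cy; split=> //=; lia.
move=> Bj; have [x cx] := c_surj (j, 0); exists x; split.
  by move=> [y /E_sat]; rewrite /= cx => -[].
by apply/chain_from_sat; rewrite /= cx.
Qed.

End ChainBits.

Section BinaryPredicate.
Variables (S : signature) (p : psym S).
Hypothesis p_binary : 1 < parity p.

Definition binary_chain_structure (B : nat -> bool) : structure S :=
  @Structure S (nat * nat) (0, 0)
    (fun q args => exists (h0 : 0 < parity q) (h1 : 1 < parity q),
        chain_step B (args (Ordinal h0)) (args (Ordinal h1)))
    (fun _ _ => (0, 0)).

Definition binary_atom (a b : nat) : formula S :=
  @FRel S (inl p) (fun i : 'I_(parity p) => if val i == 0 then a else b).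

Lemma binary_atom_closed a b k : a < k -> b < k -> closed_below k (binary_atom a b).
Proof. by move=> ha hb; apply/forallP => i /=; case: ifP. Qed.

Lemma binary_atom_sat B e a b :
  @sat S (binary_chain_structure B) e (binary_atom a b) <-> chain_step B (e a) (e b).
Proof. by split=> [[h0 [h1]] // | step]; exists (ltnW p_binary), p_binary. Qed.

Lemma RS_infty_of_binary_predicate : RS_infty (T_inf S).
Proof.
apply: (RS_infty_of_bits (bit := chain_bit binary_atom_closed) (M := binary_chain_structure)).
  by move=> B; exact: nat_pair_not_finite.
move=> B j; apply: (@chain_bit_sat _ B _ binary_atom_closed (binary_chain_structure B) id).
  by move=> p0; exists p0.
exact: binary_atom_sat.
Qed.

End BinaryPredicate.

Definition first_arg (X : Type) (x0 : X) (n : nat) : ('I_n -> X) -> X :=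
  if n is n'.+1 then fun a => a ord0 else fun _ => x0.

Lemma first_argE (X : Type) (x0 : X) n (a : 'I_n -> X) (h0 : 0 < n) :
  first_arg x0 a = a (Ordinal h0).
Proof. by case: n a h0 => // n a h0; congr a; apply: val_inj. Qed.

Definition chain_succ (B : nat -> bool) (x : nat * nat) : nat * nat :=
  if B x.1 && (x.2 <= x.1) then (x.1, x.2.+1) else x.

Lemma chain_succ_step B x y : chain_succ B x = y /\ x <> y <-> chain_step B x y.
Proof.
case: x y => [i k] [i' k']; rewrite /chain_succ /chain_step /=.
case: ifP => [/andP[Bi le_ki]|stuck]; split.
- by move=> [[<- <-] _].
- by move=> [-> _ -> _]; split=> // -[]; lia.
- by move=> [[<- <-]].
- by move=> [_ Bi _ le_ki]; rewrite Bi le_ki in stuck.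
Qed.

Section UnaryFunction.
Variables (S : signature) (f : fsym S).
Hypothesis f_pos : 0 < farity f.

Definition successor_chain_structure (B : nat -> bool) : structure S :=
  @Structure S (nat * nat) (0, 0) (fun _ _ => False)
    (fun _ args => chain_succ B (first_arg (0, 0) args)).

Definition successor_atom (a b : nat) : formula S :=
  FAnd (@FRel S (inr f) (fun i : 'I_(farity f).+1 => if val i == farity f then b else a))
       (FNot (FEq S a b)).

Lemma successor_atom_closed a b k : a < k -> b < k -> closed_below k (successor_atom a b).
Proof.
by move=> ha hb; apply/and3P; split=> //; apply/forallP => i /=; case: ifP.
Qed.

Lemma successor_atom_sat B e a b :
  @sat S (successor_chain_structure B) e (successor_atom a b) <-> chain_step B (e a) (e b).
Proof. by rewrite -chain_succ_step /= eqxx (first_argE _ _ f_pos) /= (ltn_eqF f_pos). Qed.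

Lemma RS_infty_of_unary_function : RS_infty (T_inf S).
Proof.
apply: (RS_infty_of_bits (bit := chain_bit successor_atom_closed)
                        (M := successor_chain_structure)).
  by move=> B; exact: nat_pair_not_finite.
move=> B j; apply: (@chain_bit_sat _ B _ successor_atom_closed (successor_chain_structure B) id).
  by move=> p0; exists p0.
exact: successor_atom_sat.
Qed.

End UnaryFunction.

Lemma RS_infty_of_not_small (S : signature) : ~ small_signature S -> RS_infty (T_inf S).
Proof.
move=> not_small.
case: (classic (finite_type (psym S))) => [psym_fin|]; last exact: RS_infty_of_infinite_psym.
case: (classic (finite_type (fsym S))) => [fsym_fin|]; last exact: RS_infty_of_infinite_fsym.
case: (classic (exists p : psym S, 1 < parity p)) => [[p p_binary]|no_binary].
  exact: RS_infty_of_binary_predicate p_binary.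
case: (classic (exists f : fsym S, 0 < farity f)) => [[f f_pos]|no_function].
  exact: RS_infty_of_unary_function f_pos.
case: not_small; split=> //; split=> [p|f].
  by rewrite ltnNge; apply/negP => ge2; apply: no_binary; exists p.
by apply/eqP; rewrite -leqn0 leqNgt; apply/negP => pos; apply: no_function; exists f.
Qed.

Lemma RSge_succ_inv (S : signature) (F : family S) d : RSge Peano.lt F d.+1 ->
  (d = 0 /\ family_infinite F) \/
  (0 < d /\ exists phi : nat -> sentence S,
      (forall i j, i <> j -> inconsistent2 (phi i) (phi j)) /\
      (forall k, RSge Peano.lt (restrict F (phi k)) d)).
Proof.
have succ_pred v w : is_succ Peano.lt v w.+1 -> v = w.
  by move=> [/ltP lt_vw no_between]; apply/eqP; rewrite eqn_leq -ltnS lt_vw leqNgt;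
     apply/negP => lt_wv; apply: (no_between w); apply/ltP.
move=> RS_ge; inversion RS_ge as
  [F0 w min_w|F0 w v v_min w_succ F_inf|F0 w v v_nmin w_succ F_split|F0 w w_lim].
- by case: (min_w 0); apply/ltP.
- left; move: w_succ v_min => /succ_pred -> d_min; split=> //.
  by apply/eqP; rewrite -leqn0 leqNgt; apply/negP => d_pos; apply: (d_min 0); apply/ltP.
- right; move: w_succ F_split => /succ_pred <- F_split; split=> //.
  by rewrite lt0n; apply/negP => /eqP d0; apply: v_nmin => v' /ltP; rewrite d0.
- case: w_lim => _ []; exists d; split=> [|u /ltP lt_du /ltP]; first exact/ltP.
  by rewrite ltnS leqNgt lt_du.
Qed.

(** * Unary types and the back-and-forth argument *)

Notation utype lp := {ffun 'I_(size lp) -> bool}.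

Section UnaryTypes.
Variables (S : signature) (lp : seq (psym S)).
Hypothesis lp_full : forall p, List.In p lp.

Local Notation utype := (utype lp).

(* A nullary predicate is applied to the empty tuple whatever [x] is, so [utype_of x]
   also records the truth values of the nullary predicates. *)
Definition utype_of (M : structure S) (x : dom M) : utype :=
  [ffun i => propb (@pint S M (tnth (in_tuple lp) i) (fun _ => x))].

Lemma utype_of_pint (M M' : structure S) (x : dom M) (y : dom M') p :
  utype_of x = utype_of y -> (@pint S M p (fun _ => x) <-> @pint S M' p (fun _ => y)).
Proof.
have [k <-] := In_tnth (lp_full p).
by move=> /(congr1 (fun tau : utype => tau k)); rewrite !ffunE; exact: propb_inj.
Qed.

Definition at_least (M : structure S) (tau : utype) (t : nat) : Prop :=
  exists l : list (dom M),
    [/\ List.NoDup l, List.length l = t & forall x, List.In x l -> utype_of x = tau].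

Lemma at_least_le (M : structure S) tau t t' :
  t' <= t -> at_least M tau t -> at_least M tau t'.
Proof.
elim: t => [|t IH]; first by rewrite leqn0 => /eqP->.
rewrite leq_eqVlt ltnS => /orP[/eqP-> //|le_t't].
move=> [[|x l] [xl_nodup xl_len xl_ty]] //.
apply: IH => //; exists l; split; first by case/List.NoDup_cons_iff: xl_nodup.
  by case: xl_len.
by move=> y ly; apply: xl_ty; right.
Qed.

Lemma at_least_or_covered (M : structure S) tau t :
  at_least M tau t \/ exists L, forall x : dom M, utype_of x = tau -> List.In x L.
Proof.
elim: t => [|t IH]; first by left; exists nil; split=> //; exact: List.NoDup_nil.
case: IH => [[l [l_nodup l_len l_ty]]|covered]; last by right.
case: (classic (exists x, utype_of x = tau /\ ~ List.In x l)) => [[x [x_ty x_new]]|all_in].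
  left; exists (x :: l); split=> /=; [exact: List.NoDup_cons | by rewrite l_len |].
  by move=> y [<-|/l_ty].
by right; exists l => x x_ty; apply: NNPP => x_new; apply: all_in; exists x.
Qed.

Lemma finite_of_not_at_least (M : structure S) Q :
  (forall tau, ~ at_least M tau Q) -> finite_type (dom M).
Proof.
move=> few.
suff [L L_all] : exists L, forall x : dom M, utype_of x \in enum utype -> List.In x L.
  by exists L => x; apply: L_all; rewrite mem_enum.
elim: (enum utype) => [|tau ts [L2 L2_all]]; first by exists nil.
have [/few //|[L1 L1_all]] := at_least_or_covered M tau Q.
exists (L1 ++ L2) => x; rewrite in_cons List.in_app_iff => /orP[/eqP|] x_ty.
  by left; apply: L1_all.
by right; apply: L2_all.
Qed.

End UnaryTypes.

Fixpoint depth (S : signature) (f : formula S) : nat :=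
  match f with
  | FRel _ _ | FEq _ _ => 0
  | FNot g => depth g
  | FAnd g h => maxn (depth g) (depth h)
  | FEx g => (depth g).+1
  end.

Lemma fun_ord0_eq (X : Type) n (g h : 'I_n -> X) : n = 0 -> g = h.
Proof. by move=> n0; subst n; apply: functional_extensionality => -[]. Qed.

Lemma fun_ord1_const (X : Type) n (g : 'I_n -> X) (h0 : 0 < n) :
  n < 2 -> g = fun _ => g (Ordinal h0).
Proof.
move=> n_le1; apply: functional_extensionality => i; congr g; apply: val_inj => /=.
by have := ltn_ord i; lia.
Qed.

Section SmallSignature.
Variables (S : signature) (lp : seq (psym S)) (lf : seq (fsym S)).
Hypothesis lp_full : forall p, List.In p lp.
Hypothesis lf_full : forall f, List.In f lf.
Hypothesis parity_le1 : forall p : psym S, parity p < 2.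
Hypothesis farity0 : forall f : fsym S, farity f = 0.

Local Notation utype_of := (utype_of lp).
Local Notation at_least := (@at_least S lp).
Local Notation nc := (size lf).

Definition const (M : structure S) (j : 'I_nc) : dom M :=
  @fint S M (tnth (in_tuple lf) j) (fun _ => dom_inhab M).

Definition eval_term (M : structure S) (e : nat -> dom M) (a : nat + 'I_nc) : dom M :=
  match a with inl i => e i | inr j => const M j end.

Definition term_below (n : nat) (a : nat + 'I_nc) : bool :=
  if a is inl i then i < n else true.

Definition terms_below (n : nat) : list (nat + 'I_nc) :=
  List.map inl (List.seq 0 n) ++ List.map inr (enum 'I_nc).

Lemma In_terms_below n a : List.In a (terms_below n) <-> term_below n a.
Proof.
rewrite /terms_below List.in_app_iff !List.in_map_iff.
case: a => [i|j] /=; split.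
- by move=> [[x [[<-]]]|[x []]] //; rewrite List.in_seq; lia.
- by move=> lt_in; left; exists i; rewrite List.in_seq; split=> //; lia.
- by [].
- by move=> _; right; exists j; rewrite In_mem mem_enum.
Qed.

Lemma length_terms_below n : List.length (terms_below n) = n + nc.
Proof.
by rewrite List.length_app !List.length_map List.length_seq length_size -enumT -cardE card_ord.
Qed.

Lemma term_below_scons n b : term_below n.+1 b -> b = inl 0 \/
  exists2 c, term_below n c &
    forall (M : structure S) (m : dom M) e, eval_term (scons m e) b = eval_term e c.
Proof.
by case: b => [[|i]|j] /= lt_b; [left | right; exists (inl i) | right; exists (inr j)].
Qed.

(* The position of an Ehrenfeucht-Fraisse game: a partial isomorphism between the values
   of the terms below [n]. *)
Definition agree n (M M' : structure S) (e : nat -> dom M) (e' : nat -> dom M') : Prop :=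
  (forall a b, term_below n a -> term_below n b ->
     eval_term e a = eval_term e b <-> eval_term e' a = eval_term e' b) /\
  (forall a, term_below n a -> utype_of (eval_term e a) = utype_of (eval_term e' a)).

Definition similar Q (M M' : structure S) : Prop :=
  utype_of (dom_inhab M) = utype_of (dom_inhab M') /\
  forall tau t, t <= Q -> (at_least M tau t <-> at_least M' tau t).

Lemma similar_sym Q M M' : similar Q M M' -> similar Q M' M.
Proof. by move=> [inh_ty cnt]; split=> // tau t le_tQ; apply: iff_sym; apply: cnt. Qed.

Lemma agree_sym n M M' e e' : @agree n M M' e e' -> agree n e' e.
Proof.
by move=> [eqs tys]; split=> [a b ha hb | a ha]; [apply: iff_sym; apply: eqs | rewrite tys].
Qed.

Lemma agree_scons n M M' e e' (m : dom M) (m' : dom M') :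
  @agree n M M' e e' -> utype_of m = utype_of m' ->
  (forall a, term_below n a -> eval_term e a = m <-> eval_term e' a = m') ->
  agree n.+1 (scons m e) (scons m' e').
Proof.
move=> [eqs tys] m_ty m_eqs; split=> [b c hb hc | b hb].
  case: (term_below_scons hb) => [->|[b' hb' Eb]];
  case: (term_below_scons hc) => [->|[c' hc' Ec]]; rewrite ?Eb ?Ec //=; last exact: eqs.
    by split=> /esym E; apply/esym; [apply/(m_eqs c' hc') | apply/(m_eqs c' hc')].
  exact: m_eqs b' hb'.
by case: (term_below_scons hb) => [->|[b' hb' Eb]]; rewrite ?Eb //; apply: tys.
Qed.

Lemma fresh_element Q n M M' e e' (m : dom M) :
  similar Q M M' -> @agree n M M' e e' -> n + nc < Q ->
  (forall a, term_below n a -> eval_term e a <> m) ->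
  exists m' : dom M',
    utype_of m' = utype_of m /\ forall a, term_below n a -> eval_term e' a <> m'.
Proof.
move=> [_ cnt] [eqs tys] lt_Q m_fresh; set tau := utype_of m.
apply: NNPP => no_fresh.
have covered m' : utype_of m' = tau -> exists2 a, term_below n a & eval_term e' a = m'.
  move=> m'_ty; apply: NNPP => m'_new; apply: no_fresh; exists m'; split=> // a ha Ea.
  by apply: m'_new; exists a.
have [A [A_sub A_nodup A_cover A_len]] :=
  NoDup_representatives (eval_term e) (fun a => utype_of (eval_term e a) = tau) (terms_below n).
rewrite length_terms_below in A_len.
(* [m] and the term values in [M] give [#|A| + 1 <= Q] elements of type [tau], whereas in
   [M'] every element of type [tau] is one of the [#|A|] corresponding term values. *)
have : at_least M tau (List.length A).+1.
  exists (m :: List.map (eval_term e) A); split=> /=; rewrite ?List.length_map //.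
    constructor=> // /List.in_map_iff [a [Ea /A_sub [/In_terms_below ha _]]].
    exact: m_fresh ha Ea.
  by move=> x [<- //|/List.in_map_iff [a [<- /A_sub [_ ->]]]].
move=> /cnt -/(_ ltac:(lia)) [l' [l'_nodup l'_len l'_ty]].
suff: List.incl l' (List.map (eval_term e') A).
  by move=> /(List.NoDup_incl_length l'_nodup); rewrite List.length_map l'_len; lia.
move=> x /l'_ty x_ty; have [a ha Ea] := covered x x_ty.
have [|b bA Eab] := A_cover a (proj2 (In_terms_below n a) ha); first by rewrite tys // Ea.
have [/In_terms_below hb _] := A_sub b bA.
by apply/List.in_map_iff; exists b; split=> //; rewrite -Ea; apply/esym/eqs.
Qed.

Lemma agree_extend Q n M M' e e' :
  similar Q M M' -> @agree n M M' e e' -> n + nc < Q ->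
  forall m : dom M, exists m' : dom M', agree n.+1 (scons m e) (scons m' e').
Proof.
move=> sim ag lt_Q m.
case: (classic (exists2 a, term_below n a & eval_term e a = m)) => [[a ha <-]|m_new].
  exists (eval_term e' a); apply: agree_scons => //; first exact: ag.2.
  by move=> b hb; apply: ag.1.
have [|m' [m'_ty m'_new]] := fresh_element sim ag lt_Q (m := m).
  by move=> a ha Ea; apply: m_new; exists a.
exists m'; apply: agree_scons => // a ha; split=> E; exfalso.
  by apply: m_new; exists a.
exact: m'_new ha E.
Qed.

Lemma sat_atom_agree n M M' e e' (r : rsym S) (args : 'I_(rarity r) -> nat) :
  utype_of (dom_inhab M) = utype_of (dom_inhab M') ->
  @agree n M M' e e' -> closed_below n (FRel args) ->
  (sat e (FRel args) <-> sat e' (FRel args)).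
Proof.
move=> inh_ty [eqs tys]; case: r args => [p|f] args /= /forallP args_below.
  case: (posnP (parity p)) => [p0|p_pos].
    rewrite (fun_ord0_eq (fun i => e (args i)) (fun _ => dom_inhab M) p0).
    rewrite (fun_ord0_eq (fun i => e' (args i)) (fun _ => dom_inhab M') p0).
    exact: (utype_of_pint lp_full p) inh_ty.
  rewrite (fun_ord1_const (fun i => e (args i)) p_pos (parity_le1 p)).
  rewrite (fun_ord1_const (fun i => e' (args i)) p_pos (parity_le1 p)).
  by apply: (utype_of_pint lp_full p); apply: (tys (inl _)); exact: args_below.
have [j Ej] := In_tnth (lf_full f); subst f.
have const_eq (N : structure S) (g : 'I_(farity (tnth (in_tuple lf) j)) -> dom N) :
    fint g = const N j by congr fint; apply: fun_ord0_eq; exact: farity0.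
by rewrite !const_eq; apply: (eqs (inr j) (inl (args ord_max))) => //; exact: args_below.
Qed.

Lemma sat_agree Q (M M' : structure S) : similar Q M M' ->
  forall phi n (e : nat -> dom M) (e' : nat -> dom M'),
  closed_below n phi -> agree n e e' -> n + nc + depth phi <= Q ->
  (sat e phi <-> sat e' phi).
Proof.
move=> sim phi; elim: phi => [r args|i j|g IH|g IHg h IHh|g IH] n e e' /= phi_closed ag le_Q.
- exact: sat_atom_agree sim.1 ag phi_closed.
- by case/andP: phi_closed => hi hj; apply: (ag.1 (inl i) (inl j)).
- by rewrite (IH n e e').
- case/andP: phi_closed => g_closed h_closed.
  by rewrite (IHg n e e') ?(IHh n e e') //; lia.
- split=> -[m sat_m].
    have [m' ag'] := agree_extend sim ag (ltac:(lia)) m.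
    by exists m'; apply/(IH n.+1 _ _ phi_closed ag') => //; lia.
  have [m' ag'] := agree_extend (similar_sym sim) (agree_sym ag) (ltac:(lia)) m.
  by exists m'; apply/(IH n.+1 _ _ phi_closed (agree_sym ag')) => //; lia.
Qed.
Definition profile Q (M : structure S) : utype lp * {ffun 'I_nc -> utype lp}
    * {ffun 'I_nc * 'I_nc -> bool} * {ffun utype lp * 'I_Q.+1 -> bool} :=
  (utype_of (dom_inhab M), [ffun j => utype_of (const M j)],
   [ffun jk : 'I_nc * 'I_nc => propb (const M jk.1 = const M jk.2)],
   [ffun tt : utype lp * 'I_Q.+1 => propb (at_least M tt.1 tt.2)]).

Lemma profile_eqP Q (M M' : structure S) :
  profile Q M = profile Q M' <->
  [/\ utype_of (dom_inhab M) = utype_of (dom_inhab M'),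
      forall j, utype_of (const M j) = utype_of (const M' j),
      forall j k, const M j = const M k <-> const M' j = const M' k
    & forall tau t, t <= Q -> (at_least M tau t <-> at_least M' tau t)].
Proof.
split=> [[inh cst eqs cnt]|[inh cst eqs cnt]].
  split=> // [j|j k|tau t le_tQ].
  - by move/ffunP: cst => /(_ j); rewrite !ffunE.
  - by move/ffunP: eqs => /(_ (j, k)); rewrite !ffunE; exact: propb_inj.
  - move/ffunP: cnt => /(_ (tau, Ordinal (le_tQ : t < Q.+1))).
    by rewrite !ffunE; exact: propb_inj.
congr (_, _, _, _) => //; apply/ffunP => x; rewrite !ffunE.
- exact: cst.
- exact/propb_ext/eqs.
- by apply/propb_ext/cnt; rewrite -ltnS.
Qed.

Lemma profile_sat Q (M M' : structure S) (phi : sentence S) :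
  profile Q M = profile Q M' -> nc + depth (proj1_sig phi) <= Q ->
  (satS M phi <-> satS M' phi).
Proof.
move=> /profile_eqP [inh cst eqs cnt] le_Q.
apply: (@sat_agree Q _ _ _ _ 0) => //; first exact: (proj2_sig phi).
split=> [[i|j] [i'|k] //= _ _ | [i|j] //= _]; exact: eqs || exact: cst.
Qed.

(** * Big types and the rank bound *)

Definition big_types Q (M : structure S) : {set utype lp} :=
  [set tau | propb (at_least M tau Q)].

Lemma in_big_types Q (M : structure S) tau : tau \in big_types Q M <-> at_least M tau Q.
Proof. by rewrite inE; split=> /propbP. Qed.

Section Inflation.
Variables (Q : nat) (M : structure S).
Hypothesis Q_pos : 0 < Q.

(* Every element of a type with at least [Q] elements gets countably many copies. *)
Definition inflated_dom : Type :=
  {p : dom M * nat | (p.2 == 0) || (utype_of p.1 \in big_types Q M)}.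

Definition inflate : structure S :=
  @Structure S inflated_dom (exist _ (dom_inhab M, 0) isT)
    (fun p args => pint (fun i => (sval (args i)).1))
    (fun f args => exist _ (fint (fun i => (sval (args i)).1), 0) isT).

Lemma utype_of_inflate (x : dom inflate) : utype_of x = utype_of (sval x).1.
Proof. by []. Qed.

Lemma const_inflate j : val (const inflate j) = (const M j, 0).
Proof. by []. Qed.

Lemma at_least_inflate_big tau t : tau \in big_types Q M -> at_least inflate tau t.
Proof.
move=> tau_big; have [[|x l] [_ l_len l_ty]] := proj1 (in_big_types _ _ _) tau_big.
  by move: Q_pos; rewrite -l_len.
have x_big : utype_of x \in big_types Q M by rewrite (l_ty x) //; left.
pose copy i : dom inflate := exist _ (x, i) (introT orP (or_intror x_big)).
exists (List.map copy (List.seq 0 t)); split.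
- by apply: NoDup_map_inj_in (List.seq_NoDup _ _) => i j _ _ [].
- by rewrite List.length_map List.length_seq.
- by move=> y /List.in_map_iff [i [<- _]]; rewrite utype_of_inflate /= l_ty //; left.
Qed.

Lemma at_least_inflate_small tau t :
  tau \notin big_types Q M -> (at_least inflate tau t <-> at_least M tau t).
Proof.
move=> tau_small; split=> [[l [l_nodup l_len l_ty]] | [l [l_nodup l_len l_ty]]].
  have l_orig y : List.In y l -> (sval y).2 = 0.
    move=> ly; have := l_ty _ ly; rewrite utype_of_inflate => y_ty.
    case/orP: (svalP y) => [/eqP // | y_big].
    by rewrite y_ty (negbTE tau_small) in y_big.
  exists (List.map (fun y : dom inflate => (sval y).1) l); split.
  - apply: NoDup_map_inj_in l_nodup => y z ly lz yz.
    by apply/val_inj/injective_projections => //=; rewrite !l_orig.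
  - by rewrite List.length_map.
  - by move=> x /List.in_map_iff [y [<- ly]]; rewrite -utype_of_inflate l_ty.
exists (List.map (fun x : dom M => exist _ (x, 0) isT : dom inflate) l); split.
- by apply: NoDup_map_inj_in l_nodup => x y _ _ [].
- by rewrite List.length_map.
- by move=> y /List.in_map_iff [x [<- lx]]; rewrite utype_of_inflate l_ty.
Qed.

Lemma profile_inflate Q' (M' : structure S) :
  Q <= Q' -> profile Q M = profile Q M' ->
  (forall tau, at_least M' tau Q -> at_least M' tau Q') -> profile Q' inflate = profile Q' M'.
Proof.
move=> le_QQ' /profile_eqP [inh cst eqs cnt] big_M'; apply/profile_eqP; split=> //.
- move=> j k; rewrite -eqs; split=> [/(congr1 (fun x => (val x).1)) // | E].
  by apply: val_inj; rewrite !const_inflate E.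
- move=> tau t le_tQ'; case: (boolP (tau \in big_types Q M)) => [tau_big | tau_small].
    split=> _; last exact: at_least_inflate_big.
    by apply: at_least_le le_tQ' _; apply/big_M'/cnt => //; apply/in_big_types.
  rewrite at_least_inflate_small //; case: (leqP t Q) => [le_tQ | lt_Qt]; first exact: cnt.
  split=> M_t; case/negP: tau_small; apply/in_big_types.
    exact: at_least_le (ltnW lt_Qt) M_t.
  by apply/cnt => //; apply: at_least_le (ltnW lt_Qt) M_t.
Qed.

End Inflation.

Definition depth_bound Q (phi : sentence S) : nat := maxn Q (nc + depth (proj1_sig phi)).

Lemma big_types_pos Q (M : structure S) : ~ finite_type (dom M) -> 0 < #|big_types Q M|.
Proof.
move=> M_inf; rewrite card_gt0; apply/set0Pn; apply: NNPP => none; apply: M_inf.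
apply: (finite_of_not_at_least (Q := Q)) => tau tau_big; apply: none.
by exists tau; apply/in_big_types.
Qed.

Lemma big_types_stable Q Q' (M : structure S) :
  Q <= Q' -> #|big_types Q M| <= #|big_types Q' M| ->
  forall tau, at_least M tau Q -> at_least M tau Q'.
Proof.
move=> le_QQ' card_le tau /in_big_types tau_big; apply/in_big_types.
have sub : big_types Q' M \subset big_types Q M.
  by apply/subsetP => sigma /in_big_types /(at_least_le le_QQ') /in_big_types.
by have /eqP -> : big_types Q' M == big_types Q M by rewrite eqEcard sub.
Qed.

(* Inflating [M1] keeps its profile at the depth of [phi1] and reaches that of [M2] at the
   depth of [phi2], since both only see the types that are already big at [Q]. *)
Lemma common_model Q (M1 M2 : structure S) (phi1 phi2 : sentence S) :
  0 < Q -> profile Q M1 = profile Q M2 ->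
  (forall tau, at_least M1 tau Q -> at_least M1 tau (depth_bound Q phi1)) ->
  (forall tau, at_least M2 tau Q -> at_least M2 tau (depth_bound Q phi2)) ->
  satS M1 phi1 -> satS M2 phi2 -> ~ inconsistent2 phi1 phi2.
Proof.
move=> Q_pos E12 stable1 stable2 sat1 sat2 /(_ (inflate Q M1)) [].
have E1 : profile (depth_bound Q phi1) (inflate Q M1) = profile (depth_bound Q phi1) M1.
  by apply: profile_inflate => //; exact: leq_maxl.
have E2 : profile (depth_bound Q phi2) (inflate Q M1) = profile (depth_bound Q phi2) M2.
  by apply: profile_inflate => //; exact: leq_maxl.
by split; [apply/(profile_sat E1) | apply/(profile_sat E2)] => //; exact: leq_maxr.
Qed.

Lemma RS_bound d : forall Q (F : family S), 0 < Q -> (forall T, F T -> T_inf S T) ->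
  (forall T M, F T -> models M T -> #|big_types Q M| <= d) -> ~ RSge Peano.lt F d.+1.
Proof.
elim: d => [|d IH] Q F Q_pos F_inf F_dim /RSge_succ_inv.
  case=> [[_ F_infinite]|[//]]; apply: F_infinite; exists nil => T FT.
  have [_ [M [M_inf MT]]] := F_inf T FT.
  by have := big_types_pos Q M_inf; rewrite lt0n -leqn0 (F_dim T M FT MT).
case=> [[//]|[_ [phi [phi_incons RS_phi]]]].
pose R k a := exists T M, [/\ F T, T (phi k), models M T,
  forall tau, at_least M tau Q -> at_least M tau (depth_bound Q (phi k)) & profile Q M = a].
apply: (@rel_into_list_not_injective _ (enum predT) R); last first.
  move=> k j a [T1 [M1 [F1 T1k M1T stable1 <-]]] [T2 [M2 [F2 T2j M2T stable2 E21]]].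
  apply: NNPP => ne_kj; apply: (common_model Q_pos (esym E21) stable1 stable2).
  - exact: M1T.
  - exact: M2T.
  - exact: phi_incons.
move=> k.
have [T [M [[FT Tk] MT dim_gt]]] :
    exists T M, [/\ restrict F (phi k) T, models M T
                & d < #|big_types (depth_bound Q (phi k)) M|].
  apply: NNPP => none.
  apply: (IH (depth_bound Q (phi k)) (restrict F (phi k)) _ _ _ (RS_phi k)).
  - exact: leq_trans Q_pos (leq_maxl _ _).
  - by move=> T [FT _]; exact: F_inf.
  - by move=> T M FT MT; rewrite leqNgt; apply/negP => gt; apply: none; exists T, M.
exists (profile Q M); first by apply/In_mem; rewrite mem_enum.
exists T, M; split=> //; apply: big_types_stable; first exact: leq_maxl.
exact: leq_trans (F_dim T M FT MT) dim_gt.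
Qed.

Lemma RS_small_bound : ~ RSge Peano.lt (T_inf S) #|{: utype lp}|.+1.
Proof. by apply: (@RS_bound _ 1) => // T M _ _; exact: max_card. Qed.

End SmallSignature.

Lemma RS_eq_nat_of_bounded (S : signature) (F : family S) N :
  RSge Peano.lt F 0 -> ~ RSge Peano.lt F N -> exists n, RS_eq_nat F n.
Proof.
move=> RS_ge0; elim: N => [//|N IH] RS_lt.
by case: (classic (RSge Peano.lt F N)) => [RS_geN|/IH //]; exists N.
Qed.

Definition empty_structure (S : signature) : structure S :=
  @Structure S nat 0 (fun _ _ => False) (fun _ _ => 0).

Theorem theorem3p2 (S : signature) :
  (small_signature S -> exists n : nat, RS_eq_nat (T_inf S) n) /\
  (~ small_signature S -> RS_infty (T_inf S)).
Proof.
split; last exact: RS_infty_of_not_small.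
move=> [[[lp lp_full] [lf lf_full]] [parity_le1 farity0]].
apply: (RS_eq_nat_of_bounded _ (RS_small_bound lp_full lf_full parity_le1 farity0)).
apply: RSge_zero; first by move=> v /ltP.
by exists (theory_of (empty_structure S)); apply/theory_of_T_inf/nat_not_finite.
Qed.
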